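(* If $0\ne x\in J$ is separated by partitions, then $\{\{n\}\}_{n\in\mathrm{supp}(x)}$ is an $x$-norming partition. Hence $\|x\|_J=\|x\|_2$.
   Context: For a real sequence $x=(x(n))_{n\in\mathbb N}$ let $\|x\|_J=\sup\bigl(\sum_{i=1}^n|\sum_{k\in I_i}x(k)|^2\bigr)^{1/2}$ over all $n$ and all families of pairwise disjoint intervals $I_1,\dots,I_n$ of $\mathbb N$ (intervals: nonempty sets of consecutive positive integers, possibly infinite). $J=\{x:\|x\|_J<\infty\}$; $\|x\|_2$ is the $\ell_2$ norm; for $x\in J$ and any interval $I$ the series $\sum_{k\in I}x(k)$ converges. $\mathrm{supp}(x)=\{n:x(n)\ne0\}$. A family of intervals $\mathcal I=\{I_i\}_{i\in F}$: $F=\{1,\dots,k\}$ or $F=\mathbb N$, each $I_i$ an interval, $\max I_i<\min I_{i+1}$ whenever $i+1\in F$; $\|x\|_{\mathcal I}=(\sum_{i\in F}|\sum_{k\in I_i}x(k)|^2)^{1/2}$; it is $x$-norming if $\|x\|_{\mathcal I}=\|x\|_J$. For nonempty $L\subset\mathbb N$, $\sup L=\max L$ if finite and $\infty$ otherwise. An $x$-norming partition is an $x$-norming family with $\{\min I_i,\max I_i\}\subset\mathrm{supp}(x)$ for all $i<\sup F$, and, if $F$ is finite, $\min I_i\in\mathrm{supp}(x)$ and $\sup I_i=\sup\mathrm{supp}(x)$ for $i=\sup F$. A vector $x\in J$ is separated by partitions if for any two consecutive elements $n_1<n_2$ of $\mathrm{supp}(x)$ there exists an $x$-norming partition in which $n_1$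 and $n_2$ belong to different intervals. *)

From Stdlib Require Import Reals List Arith Lia.
From Coquelicot Require Import Coquelicot.
Open Scope R_scope.

(* Sequences x = (x(n)) indexed by nat (positions 0,1,2,... play the role of
   the paper's 1,2,3,...). *)
Definition seqR := nat -> R.

(* An interval of nat: {lo, lo+1, ..., hi} (hi = Some m, requires lo <= m)
   or {lo, lo+1, ...} (hi = None). *)
Record interval := mkInterval { lo : nat; hi : option nat }.

Definition valid_interval (I : interval) : Prop :=
  match hi I with Some m => (lo I <= m)%nat | None => True end.

Definition in_interval (I : interval) (k : nat) : Prop :=
  (lo I <= k)%nat /\ match hi I with Some m => (k <= m)%nat | None => True end.

Definition fsum (f : nat -> R) (a b : nat) : R :=
  fold_right Rplus 0 (map f (List.seq a (S b - a))).

(* sum_{k in I} x(k); for infinite I this is the series (Coquelicot's total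
   Series, which is the actual sum whenever the series converges, e.g. x in J). *)
Definition isum (x : seqR) (I : interval) : R :=
  match hi I with
  | Some m => fsum x (lo I) m
  | None => Series (fun n => x (lo I + n)%nat)
  end.

Definition disjoint_intervals (I1 I2 : interval) : Prop :=
  forall k, ~ (in_interval I1 k /\ in_interval I2 k).

Definition pairwise_disjoint (l : list interval) : Prop :=
  forall i j d, (i < length l)%nat -> (j < length l)%nat -> i <> j ->
    disjoint_intervals (nth i l d) (nth j l d).

Definition normJ (x : seqR) : Rbar :=
  Lub_Rbar (fun r => exists l : list interval,
    l <> nil /\ List.Forall valid_interval l /\ pairwise_disjoint l /\
    r = sqrt (fold_right (fun I acc => (Rabs (isum x I))^2 + acc) 0 l)).

Definition inJ (x : seqR) : Prop := is_finite (normJ x).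

Definition norm2 (x : seqR) : Rbar :=
  Lub_Rbar (fun r => exists m, r = sqrt (fsum (fun k => (x k)^2) 0 m)).

Definition supp (x : seqR) (n : nat) : Prop := x n <> 0.

Definition sup_nat (L : nat -> Prop) : Rbar :=
  Lub_Rbar (fun r => exists n, L n /\ r = INR n).

Definition sup_interval (I : interval) : Rbar :=
  match hi I with Some m => Finite (INR m) | None => p_infty end.

(* A ifamily of intervals {I_i}_{i in F}; index set F = {0,...,k-1} (fF = Some k,
   k >= 1) or F = nat (fF = None). *)
Record ifamily := mkFamily { fF : option nat; fI : nat -> interval }.

Definition inF (P : ifamily) (i : nat) : bool :=
  match fF P with Some k => Nat.ltb i k | None => true end.

Definition is_family (P : ifamily) : Prop :=
  (forall k, fF P = Some k -> (1 <= k)%nat) /\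
  (forall i, inF P i = true -> valid_interval (fI P i)) /\
  (forall i, inF P (S i) = true ->
     exists m, hi (fI P i) = Some m /\ (m < lo (fI P (S i)))%nat).

Definition normI (x : seqR) (P : ifamily) : Rbar :=
  Lub_Rbar (fun r => exists m, r = sqrt (fsum (fun i =>
      if inF P i then (Rabs (isum x (fI P i)))^2 else 0) 0 m)).

Definition x_norming (x : seqR) (P : ifamily) : Prop :=
  is_family P /\ normI x P = normJ x.

Definition x_norming_partition (x : seqR) (P : ifamily) : Prop :=
  x_norming x P /\
  (forall i, inF P (S i) = true ->
     supp x (lo (fI P i)) /\
     exists m, hi (fI P i) = Some m /\ supp x m) /\
  (forall k, fF P = Some k ->
     supp x (lo (fI P (k - 1))) /\
     sup_interval (fI P (k - 1)) = sup_nat (supp x)).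

Definition separated_by_partitions (x : seqR) : Prop :=
  forall n1 n2, supp x n1 -> supp x n2 -> (n1 < n2)%nat ->
    (forall n, (n1 < n < n2)%nat -> ~ supp x n) ->
    exists P, x_norming_partition x P /\
      exists i j, inF P i = true /\ inF P j = true /\ i <> j /\
        in_interval (fI P i) n1 /\ in_interval (fI P j) n2.

(* Write Q(a,b) for the sum of x(k)^2 over a <= k <= b.  The heart of the proof is
   (x(a) + ... + x(b))^2 <= Q(a,b), by induction on b - a.  In a shortest counterexample
   [p, q] both ends lie in the support, and cutting [p, q] anywhere gives two sums of the
   same sign.  Separation by partitions provides a norming partition with an interval I_i
   ending at p.  A norming family cannot be improved by replacing a block of consecutive
   intervals with other disjoint intervals; merging I_i with the intervals that start in
   (p, q] (splitting at q when the last of them reaches beyond q) would improve it.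
   Given the inequality, every disjoint family has J-sum at most ||x||_2^2 (infinite
   intervals are truncated, their series converging because x is in J), so
   ||x||_J = ||x||_2, and the singletons of the support, listed in increasing order,
   form a norming partition. *)

From Stdlib Require Import Reals List Arith Lia Lra Wf_nat Classical ClassicalEpsilon.
From Coquelicot Require Import Coquelicot.
Open Scope R_scope.

Lemma fsum_sum_n_m (f : nat -> R) (a b : nat) : fsum f a b = sum_n_m f a b.
Proof.
  unfold fsum, sum_n_m, Iter.iter_nat.
  induction (S b - a)%nat as [|n IH] in a |- *; simpl; [reflexivity|].
  now rewrite IH.
Qed.

Lemma fsum_empty (f : nat -> R) (a b : nat) : (b < a)%nat -> fsum f a b = 0.
Proof. intros H. rewrite fsum_sum_n_m. exact (sum_n_m_zero f a b H). Qed.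

Lemma fsum_single (f : nat -> R) (a : nat) : fsum f a a = f a.
Proof. rewrite fsum_sum_n_m. apply sum_n_n. Qed.

Lemma fsum_split (f : nat -> R) (a b c : nat) : (a <= S b)%nat -> (b <= c)%nat ->
  fsum f a c = fsum f a b + fsum f (S b) c.
Proof. intros H1 H2. rewrite !fsum_sum_n_m. exact (sum_n_m_Chasles f a b c H1 H2). Qed.

Lemma fsum_first (f : nat -> R) (a b : nat) : (a <= b)%nat -> fsum f a b = f a + fsum f (S a) b.
Proof. intros H. rewrite !fsum_sum_n_m. exact (sum_Sn_m f a b H). Qed.

Lemma fsum_last (f : nat -> R) (a b : nat) : (a <= S b)%nat ->
  fsum f a (S b) = fsum f a b + f (S b).
Proof. intros H. rewrite !fsum_sum_n_m. exact (sum_n_Sm f a b H). Qed.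

Lemma fsum_ext (f g : nat -> R) (a b : nat) : (forall k, (a <= k <= b)%nat -> f k = g k) ->
  fsum f a b = fsum g a b.
Proof. intros H. rewrite !fsum_sum_n_m. now apply sum_n_m_ext_loc. Qed.

Lemma fsum_le (f g : nat -> R) (a b : nat) : (forall k, f k <= g k) -> fsum f a b <= fsum g a b.
Proof. intros H. rewrite !fsum_sum_n_m. now apply sum_n_m_le. Qed.

Lemma fsum_eq0 (f : nat -> R) (a b : nat) : (forall k, (a <= k <= b)%nat -> f k = 0) ->
  fsum f a b = 0.
Proof.
  intros H. rewrite (fsum_ext f (fun _ => zero)) by exact H.
  rewrite fsum_sum_n_m. exact (@sum_n_m_const_zero R_AbelianMonoid a b).
Qed.

Lemma fsum_nonneg (f : nat -> R) (a b : nat) : (forall k, 0 <= f k) -> 0 <= fsum f a b.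
Proof.
  intros H. rewrite <- (fsum_eq0 (fun _ => 0) a b) by reflexivity. now apply fsum_le.
Qed.

Lemma fsum_le_r (f : nat -> R) (a b b' : nat) : (forall k, 0 <= f k) -> (b <= b')%nat ->
  fsum f a b <= fsum f a b'.
Proof.
  intros H Hb. destruct (le_lt_dec a (S b)).
  - rewrite (fsum_split f a b b') by lia. pose proof (fsum_nonneg f (S b) b' H). lra.
  - rewrite fsum_empty by lia. now apply fsum_nonneg.
Qed.

Lemma fsum_shift (f : nat -> R) (a n m : nat) :
  fsum (fun k => f (a + k)%nat) n m = fsum f (a + n) (a + m).
Proof.
  unfold fsum. replace (S (a + m) - (a + n))%nat with (S m - n)%nat by lia.
  induction (S m - n)%nat as [|l IH] in n |- *; simpl; [reflexivity|].
  rewrite IH. now replace (a + S n)%nat with (S (a + n)) by lia.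
Qed.

Lemma sum_n_shift_fsum (f : nat -> R) (a n : nat) :
  sum_n (fun k => f (a + k)%nat) n = fsum f a (a + n).
Proof. unfold sum_n. rewrite <- fsum_sum_n_m, fsum_shift. now rewrite Nat.add_0_r. Qed.

Definition sumlist (l : list R) : R := fold_right Rplus 0 l.

Lemma sumlist_app (l1 l2 : list R) : sumlist (l1 ++ l2) = sumlist l1 + sumlist l2.
Proof. induction l1 as [|r l1 IH]; unfold sumlist in *; cbn; [lra|]. rewrite IH. lra. Qed.

Lemma sumlist_map_ext {A} (f g : A -> R) (l : list A) : (forall k, In k l -> f k = g k) ->
  sumlist (map f l) = sumlist (map g l).
Proof. intros H. f_equal. now apply map_ext_in. Qed.

Lemma sumlist_map_le {A} (f g : A -> R) (l : list A) : (forall k, In k l -> f k <= g k) ->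
  sumlist (map f l) <= sumlist (map g l).
Proof.
  induction l as [|k l IH]; intros H; unfold sumlist in *; simpl; [lra|].
  specialize (IH (fun k' Hk' => H k' (or_intror Hk'))). specialize (H k (or_introl eq_refl)). lra.
Qed.

Lemma sumlist_map_zero {A} (l : list A) : sumlist (map (fun _ => 0) l) = 0.
Proof. induction l as [|k l IH]; unfold sumlist in *; simpl; [lra|]. rewrite IH. lra. Qed.

Lemma sumlist_map_fsum {A} (h : A -> nat -> R) (l : list A) (u v : nat) :
  sumlist (map (fun I => fsum (h I) u v) l) = fsum (fun k => sumlist (map (fun I => h I k) l)) u v.
Proof.
  induction l as [|I l IH]; simpl.
  - symmetry. now apply fsum_eq0.
  - unfold sumlist in *; simpl. rewrite IH, !fsum_sum_n_m.
    exact (eq_sym (sum_n_m_plus (h I) (fun k => fold_right Rplus 0 (map (fun I => h I k) l)) u v)).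
Qed.

Lemma fsum_0_sumlist (f : nat -> R) (m : nat) : fsum f 0 m = sumlist (map f (List.seq 0 (S m))).
Proof. unfold fsum. now rewrite Nat.sub_0_r. Qed.

Lemma sumlist_seq_le (f : nat -> R) (n n' : nat) : (forall k, 0 <= f k) -> (n <= n')%nat ->
  sumlist (map f (List.seq 0 n)) <= sumlist (map f (List.seq 0 n')).
Proof.
  intros Hf H. replace n' with (n + (n' - n))%nat by lia.
  rewrite seq_app, map_app, sumlist_app.
  assert (0 <= sumlist (map f (List.seq (0 + n) (n' - n)))).
  { rewrite <- (sumlist_map_zero (List.seq (0 + n) (n' - n))). now apply sumlist_map_le. }
  lra.
Qed.

Definition subinterval (J I : interval) : Prop :=
  (lo I <= lo J)%nat /\
  match hi I with Some e => exists m, hi J = Some m /\ (m <= e)%nat | None => True end.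

Lemma subinterval_in (J I : interval) (k : nat) :
  subinterval J I -> in_interval J k -> in_interval I k.
Proof.
  unfold subinterval, in_interval. intros [H1 H2] [H3 H4]. split; [lia|].
  destruct (hi I); [|trivial]. destruct H2 as [m [Hm Hme]]. rewrite Hm in H4. lia.
Qed.

Lemma disjoint_intervals_sym (I J : interval) : disjoint_intervals I J -> disjoint_intervals J I.
Proof. intros H k [H1 H2]. now apply (H k). Qed.

Lemma disjoint_intervals_lt (I J : interval) (m : nat) :
  hi I = Some m -> (m < lo J)%nat -> disjoint_intervals I J.
Proof. intros H1 H2 k [[_ A] [B _]]. rewrite H1 in A. lia. Qed.

Lemma pairwise_disjoint_nil : pairwise_disjoint nil.
Proof. intros i j d Hi. simpl in Hi. lia. Qed.

Lemma pairwise_disjoint_cons (I : interval) (l : list interval) :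
  (forall J, In J l -> disjoint_intervals I J) -> pairwise_disjoint l ->
  pairwise_disjoint (I :: l).
Proof.
  intros H1 H2 [|i] [|j] d Hi Hj Hij; simpl in *.
  - lia.
  - apply H1, nth_In. lia.
  - apply disjoint_intervals_sym, H1, nth_In. lia.
  - apply H2; lia.
Qed.

Lemma pairwise_disjoint_cons_inv (I : interval) (l : list interval) :
  pairwise_disjoint (I :: l) ->
  pairwise_disjoint l /\ (forall J, In J l -> disjoint_intervals I J).
Proof.
  intros H. split.
  - intros i j d Hi Hj Hij. apply (H (S i) (S j) d); simpl; lia.
  - intros J HJ. destruct (In_nth l J I HJ) as [n [Hn <-]].
    apply (H 0%nat (S n) I); simpl; lia.
Qed.

Lemma pairwise_disjoint_app (l1 l2 : list interval) :
  pairwise_disjoint l1 -> pairwise_disjoint l2 ->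
  (forall I J, In I l1 -> In J l2 -> disjoint_intervals I J) ->
  pairwise_disjoint (l1 ++ l2).
Proof.
  induction l1 as [|I l1 IH]; simpl; intros H1 H2 H3; [exact H2|].
  apply pairwise_disjoint_cons_inv in H1 as [H1a H1b]. apply pairwise_disjoint_cons.
  - intros J HJ. apply in_app_or in HJ as [HJ|HJ]; auto.
  - apply IH; auto.
Qed.

Lemma pairwise_disjoint_map_subinterval (f : interval -> interval) (l : list interval) :
  (forall I, subinterval (f I) I) -> pairwise_disjoint l -> pairwise_disjoint (map f l).
Proof.
  intros Hf. induction l as [|I l IH]; intros Hd; simpl; [apply pairwise_disjoint_nil|].
  apply pairwise_disjoint_cons_inv in Hd as [Hd1 Hd2]. apply pairwise_disjoint_cons; auto.
  intros J' HJ'. apply in_map_iff in HJ' as [J [<- HJ]].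
  intros k [H1 H2]. apply (Hd2 J HJ k). split; eapply subinterval_in; eauto.
Qed.

Lemma pairwise_disjoint_singletons (L : list nat) :
  NoDup L -> pairwise_disjoint (map (fun k => mkInterval k (Some k)) L).
Proof.
  induction L as [|k L IH]; intros HN; simpl; [apply pairwise_disjoint_nil|].
  inversion_clear HN as [|? ? Hk HL]. apply pairwise_disjoint_cons; auto.
  intros J HJ. apply in_map_iff in HJ as [k' [<- Hk']].
  intros n [[A1 A2] [A3 A4]]. simpl in *. assert (k = k') as -> by lia. contradiction.
Qed.

Lemma inF_le (P : ifamily) (i j : nat) : inF P j = true -> (i <= j)%nat -> inF P i = true.
Proof.
  unfold inF. destruct (fF P); [|trivial].
  rewrite !Nat.ltb_lt. lia.
Qed.

Lemma family_valid (P : ifamily) (i : nat) :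
  is_family P -> inF P i = true -> valid_interval (fI P i).
Proof. intros [_ [H _]]. apply H. Qed.

Lemma family_hi_lt_lo (P : ifamily) (i j : nat) : is_family P -> (i < j)%nat -> inF P j = true ->
  exists m, hi (fI P i) = Some m /\ (m < lo (fI P j))%nat.
Proof.
  intros HP. induction j as [|j IH]; intros Hij Hj; [lia|].
  destruct HP as [_ [Hv Hs]]. destruct (Hs j Hj) as [m [Hm1 Hm2]].
  destruct (Nat.eq_dec i j) as [->|Hne]; [eauto|].
  assert (Hj' : inF P j = true) by (apply (inF_le P j (S j)); auto).
  destruct (IH ltac:(lia) Hj') as [m' [Hm'1 Hm'2]].
  exists m'. split; [exact Hm'1|]. specialize (Hv j Hj'). unfold valid_interval in Hv.
  rewrite Hm1 in Hv. lia.
Qed.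

Lemma family_index_le_lo (P : ifamily) (j : nat) : is_family P -> inF P j = true ->
  (j <= lo (fI P j))%nat.
Proof.
  intros HP. induction j as [|j IH]; intros Hj; [lia|].
  destruct (family_hi_lt_lo P j (S j) HP ltac:(lia) Hj) as [m [Hm1 Hm2]].
  pose proof (family_valid P j HP (inF_le P j (S j) Hj ltac:(lia))) as Hv.
  unfold valid_interval in Hv. rewrite Hm1 in Hv.
  specialize (IH (inF_le P j (S j) Hj ltac:(lia))). lia.
Qed.

Lemma family_disjoint (P : ifamily) (i j : nat) : is_family P -> inF P i = true -> inF P j = true ->
  i <> j -> disjoint_intervals (fI P i) (fI P j).
Proof.
  intros HP Hi Hj Hij. destruct (Nat.lt_total i j) as [H|[H|H]]; [|lia|].
  - destruct (family_hi_lt_lo P i j HP H Hj) as [m [Hm1 Hm2]]. eapply disjoint_intervals_lt; eauto.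
  - destruct (family_hi_lt_lo P j i HP H Hi) as [m [Hm1 Hm2]].
    apply disjoint_intervals_sym. eapply disjoint_intervals_lt; eauto.
Qed.

(* [J] avoids every interval of [P] outside the block I_i0, ..., I_i1. *)
Definition in_block_gap (P : ifamily) (i0 i1 : nat) (J : interval) : Prop :=
  (lo (fI P i0) <= lo J)%nat /\
  forall j, inF P j = true -> (i1 < j)%nat -> exists m, hi J = Some m /\ (m < lo (fI P j))%nat.

Lemma in_block_gap_hull (P : ifamily) (i0 i1 : nat) (J : interval) : is_family P ->
  (lo (fI P i0) <= lo J)%nat ->
  (forall e, hi (fI P i1) = Some e -> exists m, hi J = Some m /\ (m <= e)%nat) ->
  in_block_gap P i0 i1 J.
Proof.
  intros HP Hlo Hhi. split; [exact Hlo|]. intros j Hj Hij.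
  destruct (family_hi_lt_lo P i1 j HP Hij Hj) as [e [He1 He2]].
  destruct (Hhi e He1) as [m [Hm1 Hm2]]. exists m. split; [exact Hm1|lia].
Qed.

Lemma family_disjoint_outside_block (P : ifamily) (i0 i1 j : nat) (J : interval) :
  is_family P -> inF P i1 = true -> inF P j = true -> (i0 <= i1)%nat ->
  (j < i0 \/ i1 < j)%nat -> in_block_gap P i0 i1 J -> disjoint_intervals J (fI P j).
Proof.
  intros HP Hi1 Hj Hi [Hji|Hij] [HJlo HJhi].
  - destruct (family_hi_lt_lo P j i0 HP Hji (inF_le P i0 i1 Hi1 Hi)) as [m [Hm1 Hm2]].
    apply disjoint_intervals_sym. apply (disjoint_intervals_lt _ _ m); [exact Hm1|lia].
  - destruct (HJhi j Hj Hij) as [m [Hm1 Hm2]]. exact (disjoint_intervals_lt _ _ m Hm1 Hm2).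
Qed.

Lemma pairwise_disjoint_family (P : ifamily) (L : list nat) : is_family P -> NoDup L ->
  (forall j, In j L -> inF P j = true) -> pairwise_disjoint (map (fI P) L).
Proof.
  intros HP. induction L as [|j L IH]; intros HN HL; simpl; [apply pairwise_disjoint_nil|].
  inversion_clear HN as [|? ? Hj HL']. apply pairwise_disjoint_cons.
  - intros J HJ. apply in_map_iff in HJ as [j' [<- Hj']].
    apply family_disjoint; auto; [apply HL; simpl; auto..|]. intros ->. contradiction.
  - apply IH; auto. intros; apply HL; simpl; auto.
Qed.

Lemma Forall_valid_family (P : ifamily) (L : list nat) : is_family P ->
  (forall j, In j L -> inF P j = true) -> List.Forall valid_interval (map (fI P) L).
Proof.
  intros HP HL. apply List.Forall_forall. intros I HI. apply in_map_iff in HI as [j [<- Hj]].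
  apply family_valid; auto.
Qed.

Definition jsum (x : seqR) (l : list interval) : R :=
  fold_right (fun I acc => Rabs (isum x I) ^ 2 + acc) 0 l.

Lemma jsum_nil (x : seqR) : jsum x nil = 0.
Proof. reflexivity. Qed.

Lemma jsum_cons (x : seqR) (I : interval) (l : list interval) :
  jsum x (I :: l) = Rabs (isum x I) ^ 2 + jsum x l.
Proof. reflexivity. Qed.

Lemma isum_finite (x : seqR) (a b : nat) : isum x (mkInterval a (Some b)) = fsum x a b.
Proof. reflexivity. Qed.

Lemma jsum_app (x : seqR) (l1 l2 : list interval) : jsum x (l1 ++ l2) = jsum x l1 + jsum x l2.
Proof.
  induction l1 as [|I l1 IH]; unfold jsum in *; cbn [app fold_right]; [lra|].
  rewrite IH. lra.
Qed.

Lemma jsum_nonneg (x : seqR) (l : list interval) : 0 <= jsum x l.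
Proof.
  induction l as [|I l IH]; unfold jsum in *; cbn [fold_right]; [lra|].
  pose proof (pow2_ge_0 (Rabs (isum x I))). lra.
Qed.

Lemma jsum_sumlist (x : seqR) (l : list interval) :
  jsum x l = sumlist (map (fun I => Rabs (isum x I) ^ 2) l).
Proof.
  induction l as [|I l IH]; unfold jsum, sumlist in *; cbn [map fold_right]; [reflexivity|].
  now rewrite IH.
Qed.

Lemma sqrt_jsum_le_normJ (x : seqR) (N : R) (l : list interval) :
  normJ x = Finite N -> l <> nil -> List.Forall valid_interval l -> pairwise_disjoint l ->
  sqrt (jsum x l) <= N.
Proof.
  intros HN Hl Hv Hd. unfold normJ in HN.
  match type of HN with Lub_Rbar ?E = _ => destruct (Lub_Rbar_correct E) as [Hub _] end.
  rewrite HN in Hub. apply (Hub (sqrt (jsum x l))). now exists l.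
Qed.

Lemma normJ_nonneg (x : seqR) (N : R) : normJ x = Finite N -> 0 <= N.
Proof.
  intros HN. eapply Rle_trans; [apply sqrt_pos|].
  apply (sqrt_jsum_le_normJ x N (map (fun k => mkInterval k (Some k)) (0%nat :: nil)) HN).
  - discriminate.
  - repeat constructor.
  - apply pairwise_disjoint_singletons. repeat constructor. intros [].
Qed.

Lemma jsum_le_normJ (x : seqR) (N : R) (l : list interval) :
  normJ x = Finite N -> List.Forall valid_interval l -> pairwise_disjoint l -> jsum x l <= N ^ 2.
Proof.
  intros HN Hv Hd. pose proof (normJ_nonneg x N HN).
  destruct l as [|I l]; [unfold jsum; simpl; nra|].
  pose proof (sqrt_jsum_le_normJ x N (I :: l) HN ltac:(discriminate) Hv Hd).
  rewrite <- (pow2_sqrt (jsum x (I :: l))) by apply jsum_nonneg.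
  apply pow_incr. split; [apply sqrt_pos|assumption].
Qed.

Lemma disjoint_blocks_of_large_sums (x : seqR) (a : nat) (eps : R) : 0 < eps ->
  (forall N0, exists n m, (N0 <= n)%nat /\ (N0 <= m)%nat /\ eps <= Rabs (fsum x (a + n) (a + m))) ->
  forall k, exists l B, pairwise_disjoint l /\ List.Forall valid_interval l /\
    (forall I, In I l -> exists e, hi I = Some e /\ (e < B)%nat) /\ INR k * eps ^ 2 <= jsum x l.
Proof.
  intros Heps H. induction k as [|k IH].
  - exists nil, 0%nat. repeat split; [apply pairwise_disjoint_nil|constructor|intros I []|].
    unfold jsum; simpl. lra.
  - destruct IH as [l [B [H1 [H2 [H3 H4]]]]].
    destruct (H B) as [n [m [Hn [Hm He]]]].
    assert (Hnm : (n <= m)%nat).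
    { destruct (le_lt_dec n m); [assumption|].
      rewrite fsum_empty, Rabs_R0 in He by lia. lra. }
    exists (mkInterval (a + n)%nat (Some (a + m)%nat) :: l), (S (a + m)). repeat split.
    + apply pairwise_disjoint_cons; [|assumption]. intros J HJ.
      destruct (H3 J HJ) as [e [He1 He2]].
      apply disjoint_intervals_sym. apply (disjoint_intervals_lt _ _ e); simpl; [assumption|lia].
    + constructor; [unfold valid_interval; simpl; lia|assumption].
    + intros I [<-|HI]; [exists (a + m)%nat; simpl; split; auto|].
      destruct (H3 I HI) as [e [He1 He2]]. exists e. split; [assumption|lia].
    + rewrite jsum_cons, S_INR. unfold isum; simpl.
      assert (eps ^ 2 <= Rabs (fsum x (a + n) (a + m)) ^ 2) by (apply pow_incr; lra).
      lra.
Qed.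

Lemma ex_series_of_normJ (x : seqR) (N : R) (a : nat) :
  normJ x = Finite N -> ex_series (fun n => x (a + n)%nat).
Proof.
  intros HN. apply (@ex_series_Cauchy R_AbsRing R_CompleteNormedModule). intros eps.
  apply NNPP. intros Hc.
  assert (Hlarge : forall N0, exists n m, (N0 <= n)%nat /\ (N0 <= m)%nat /\
     eps <= Rabs (fsum x (a + n) (a + m))).
  { intros N0. apply NNPP. intros Hn. apply Hc. exists N0. intros n m H1 H2.
    rewrite <- fsum_sum_n_m, fsum_shift. apply Rnot_le_lt. intros Hle. apply Hn. eauto. }
  pose proof (cond_pos eps) as Hpos.
  assert (He2 : 0 < eps ^ 2) by (apply pow_lt; lra).
  destruct (nfloor_ex (N ^ 2 / eps ^ 2)) as [k [_ Hk]].
  { apply Rdiv_le_0_compat; [apply pow2_ge_0|assumption]. }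
  destruct (disjoint_blocks_of_large_sums x a eps Hpos Hlarge (S k)) as [l [B [H1 [H2 [_ H4]]]]].
  pose proof (jsum_le_normJ x N l HN H2 H1). rewrite S_INR in H4.
  apply Rmult_lt_compat_r with (r := eps ^ 2) in Hk; [|assumption].
  unfold Rdiv in Hk. rewrite Rmult_assoc, Rinv_l in Hk by lra. lra.
Qed.

Lemma isum_split (x : seqR) (N : R) (a b : nat) (h : option nat) : normJ x = Finite N ->
  (a <= S b)%nat -> valid_interval (mkInterval b h) ->
  isum x (mkInterval a h) = fsum x a b + isum x (mkInterval (S b) h).
Proof.
  intros HN Hab Hh. unfold isum; cbn [lo hi].
  destruct h as [e|]; [exact (fsum_split x a b e Hab Hh)|].
  destruct (Nat.eq_dec a (S b)) as [->|Hne].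
  - rewrite fsum_empty by lia. lra.
  - rewrite (Series_incr_n _ (S b - a)) by (lia || apply (ex_series_of_normJ x N a HN)).
    rewrite <- sum_n_Reals, sum_n_shift_fsum.
    replace (a + Init.Nat.pred (S b - a))%nat with b by lia.
    f_equal. apply Series_ext. intros n. f_equal. lia.
Qed.

Definition famsq (x : seqR) (P : ifamily) (i : nat) : R :=
  if inF P i then Rabs (isum x (fI P i)) ^ 2 else 0.

Lemma famsq_in (x : seqR) (P : ifamily) (i : nat) :
  inF P i = true -> famsq x P i = Rabs (isum x (fI P i)) ^ 2.
Proof. unfold famsq. now intros ->. Qed.

Lemma famsq_nonneg (x : seqR) (P : ifamily) (i : nat) : 0 <= famsq x P i.
Proof. unfold famsq. destruct (inF P i); [apply pow2_ge_0|lra]. Qed.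

Lemma jsum_family (x : seqR) (P : ifamily) (L : list nat) :
  (forall j, In j L -> inF P j = true) ->
  jsum x (map (fI P) L) = sumlist (map (famsq x P) L).
Proof.
  intros HL. rewrite jsum_sumlist, map_map. apply sumlist_map_ext. intros j Hj.
  unfold famsq. now rewrite HL.
Qed.

Lemma Lub_Rbar_dominated_eq (E1 E2 : R -> Prop) :
  (forall a, E1 a -> exists b, E2 b /\ a <= b) -> (forall b, E2 b -> exists a, E1 a /\ b <= a) ->
  Lub_Rbar E1 = Lub_Rbar E2.
Proof.
  intros H1 H2.
  destruct (Lub_Rbar_correct E1) as [U1 L1], (Lub_Rbar_correct E2) as [U2 L2].
  apply Rbar_le_antisym.
  - apply L1. intros a Ha. destruct (H1 a Ha) as [b [Hb Hab]].
    apply (Rbar_le_trans _ (Finite b)); [exact Hab|]. now apply U2.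
  - apply L2. intros b Hb. destruct (H2 b Hb) as [a [Ha Hab]].
    apply (Rbar_le_trans _ (Finite a)); [exact Hab|]. now apply U1.
Qed.

Lemma normI_sq_le (x : seqR) (P : ifamily) (N B : R) : normI x P = Finite N -> 0 <= N ->
  (forall m, fsum (famsq x P) 0 m <= B) -> N ^ 2 <= B.
Proof.
  intros HI HN0 HB. unfold normI in HI.
  match type of HI with Lub_Rbar ?E = _ => destruct (Lub_Rbar_correct E) as [_ Hlub] end.
  rewrite HI in Hlub.
  assert (HB0 : 0 <= B).
  { eapply Rle_trans; [apply fsum_nonneg, famsq_nonneg|apply (HB 0%nat)]. }
  assert (HNB : N <= sqrt B).
  { apply (Hlub (Finite (sqrt B))). intros r [m ->]. apply sqrt_le_1_alt, HB. }
  rewrite <- (pow2_sqrt B) by assumption. apply pow_incr. lra.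
Qed.

Lemma famsq_prefix_dominated (x : seqR) (P : ifamily) (i m : nat) : inF P i = true ->
  exists m', inF P m' = true /\ (i <= m')%nat /\ fsum (famsq x P) 0 m <= fsum (famsq x P) 0 m'.
Proof.
  intros Hi. unfold inF in Hi. destruct (fF P) as [k|] eqn:Hk.
  - apply Nat.ltb_lt in Hi. exists (k - 1)%nat.
    split; [unfold inF; rewrite Hk; apply Nat.ltb_lt; lia|].
    split; [lia|].
    destruct (le_lt_dec m (k - 1)); [apply fsum_le_r; [apply famsq_nonneg|assumption]|].
    rewrite (fsum_split _ 0 (k - 1) m), (fsum_eq0 _ (S (k - 1)) m) by
      (lia || (intros j Hj; unfold famsq, inF; rewrite Hk;
               replace (j <? k)%nat with false by (symmetry; apply Nat.ltb_ge; lia); reflexivity)).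
    lra.
  - exists (Nat.max m i). split; [unfold inF; now rewrite Hk|]. split; [lia|].
    apply fsum_le_r; [apply famsq_nonneg|lia].
Qed.

(** * Blocks of a norming family *)

Lemma jsum_replace_block (x : seqR) (N : R) (P : ifamily) (i0 i1 : nat) (new : list interval) :
  normJ x = Finite N -> is_family P -> normI x P = Finite N ->
  (i0 <= i1)%nat -> inF P i1 = true ->
  List.Forall valid_interval new -> pairwise_disjoint new ->
  (forall J, In J new -> in_block_gap P i0 i1 J) ->
  jsum x new <= fsum (famsq x P) i0 i1.
Proof.
  intros HN HP HI Hi01 Hi1 Hv Hd Hsub.
  set (delta := jsum x new - fsum (famsq x P) i0 i1).
  assert (Hlong : forall m, inF P m = true -> (i1 <= m)%nat ->
            fsum (famsq x P) 0 m + delta <= N ^ 2).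
  { intros m Hm Hi1m.
    set (pre := List.seq 0 i0). set (post := List.seq (S i1) (m - i1)).
    assert (Hpre : forall j, In j pre -> inF P j = true /\ (j < i0)%nat).
    { intros j Hj. apply in_seq in Hj. split; [apply (inF_le P j m Hm)|]; lia. }
    assert (Hpost : forall j, In j post -> inF P j = true /\ (i1 < j)%nat).
    { intros j Hj. apply in_seq in Hj. split; [apply (inF_le P j m Hm)|]; lia. }
    assert (Hsplit : fsum (famsq x P) 0 m = sumlist (map (famsq x P) pre) +
              fsum (famsq x P) i0 i1 + sumlist (map (famsq x P) post)).
    { unfold fsum at 1. replace (S m - 0)%nat with (i0 + (S i1 - i0) + (m - i1))%nat by lia.
      rewrite !seq_app, !map_app, !sumlist_app.
      replace (0 + (i0 + (S i1 - i0)))%nat with (S i1) by lia. reflexivity. }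
    assert (Hfam : forall L, (forall j, In j L -> inF P j = true /\ (j < i0 \/ i1 < j)%nat) ->
              forall J I, In J new -> In I (map (fI P) L) -> disjoint_intervals J I).
    { intros L HL J I HJ HI'. apply in_map_iff in HI' as [j [<- Hj]]. destruct (HL j Hj).
      apply (family_disjoint_outside_block P i0 i1); auto. }
    assert (HG : jsum x (map (fI P) pre ++ new ++ map (fI P) post) <= N ^ 2).
    { apply (jsum_le_normJ x N _ HN).
      - apply List.Forall_app; split; [|apply List.Forall_app; split; [assumption|]];
          apply Forall_valid_family; [assumption| |assumption|];
          intros j Hj; [apply (Hpre j Hj)|apply (Hpost j Hj)].
      - apply pairwise_disjoint_app; [|apply pairwise_disjoint_app|].
        + apply pairwise_disjoint_family; [assumption|apply seq_NoDup|].
          intros j Hj. apply (Hpre j Hj).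
        + assumption.
        + apply pairwise_disjoint_family; [assumption|apply seq_NoDup|].
          intros j Hj. apply (Hpost j Hj).
        + apply (Hfam post). intros j Hj. destruct (Hpost j Hj). auto.
        + intros I J HI' HJ. apply in_app_or in HJ as [HJ|HJ].
          * apply disjoint_intervals_sym. apply (Hfam pre); [|assumption..].
            intros j Hj. destruct (Hpre j Hj). auto.
          * apply in_map_iff in HI' as [j [<- Hj]]. apply in_map_iff in HJ as [j' [<- Hj']].
            destruct (Hpre j Hj), (Hpost j' Hj').
            apply family_disjoint; auto. lia. }
    rewrite !jsum_app, !jsum_family in HG
      by (intros j Hj; first [apply (Hpost j Hj) | apply (Hpre j Hj)]).
    unfold delta. lra. }
  assert (Hall : forall m, fsum (famsq x P) 0 m <= N ^ 2 - delta).
  { intros m. destruct (famsq_prefix_dominated x P i1 m Hi1) as [m' [H1 [H2 H3]]].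
    specialize (Hlong m' H1 H2). lra. }
  pose proof (normI_sq_le x P N _ HI (normJ_nonneg x N HN) Hall). unfold delta in *. lra.
Qed.

(** * The square of an interval sum is at most the sum of squares *)

Definition sqr (x : seqR) (k : nat) : R := x k ^ 2.

Lemma sqr_nonneg (x : seqR) (k : nat) : 0 <= sqr x k.
Proof. apply pow2_ge_0. Qed.

Definition inb (I : interval) (k : nat) : bool :=
  andb (lo I <=? k)%nat (match hi I with Some m => (k <=? m)%nat | None => true end).

Lemma inb_in_interval (I : interval) (k : nat) : inb I k = true -> in_interval I k.
Proof.
  unfold inb, in_interval. intros H. apply andb_prop in H as [H1 H2].
  apply Nat.leb_le in H1. split; [exact H1|]. destruct (hi I); [now apply Nat.leb_le|trivial].
Qed.

Lemma fsum_indicator (g : nat -> R) (a b u v : nat) : (u <= a)%nat -> (b <= v)%nat ->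
  fsum g a b = fsum (fun k => if inb (mkInterval a (Some b)) k then g k else 0) u v.
Proof.
  intros Hu Hv. set (h := fun k => if inb (mkInterval a (Some b)) k then g k else 0).
  assert (Hout : forall k, (k < a \/ b < k)%nat -> h k = 0).
  { intros k Hk. unfold h, inb; cbn [lo hi].
    destruct (a <=? k)%nat eqn:E1, (k <=? b)%nat eqn:E2; try reflexivity.
    apply Nat.leb_le in E1, E2. lia. }
  destruct (le_lt_dec a b) as [Hab|Hab].
  2:{ rewrite fsum_empty by exact Hab. symmetry. apply fsum_eq0. intros k _. apply Hout. lia. }
  assert (Hlow : fsum h u v = fsum h a v).
  { destruct (Nat.eq_dec u a) as [->|Hne]; [reflexivity|].
    rewrite (fsum_split h u (pred a) v), (fsum_eq0 h u (pred a))
      by (lia || (intros; apply Hout; lia)).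
    replace (S (pred a)) with a by lia. lra. }
  rewrite Hlow, (fsum_split h a b v), (fsum_eq0 h (S b) v) by (lia || (intros; apply Hout; lia)).
  rewrite Rplus_0_r. apply fsum_ext. intros k Hk. unfold h, inb; cbn [lo hi].
  replace (andb (a <=? k)%nat (k <=? b)%nat) with true; [reflexivity|].
  symmetry. apply andb_true_intro. split; apply Nat.leb_le; lia.
Qed.

Lemma sumlist_indicator_le (l : list interval) (k : nat) (y : R) :
  pairwise_disjoint l -> 0 <= y -> sumlist (map (fun I => if inb I k then y else 0) l) <= y.
Proof.
  induction l as [|I l IH]; intros Hd Hy; unfold sumlist in *; cbn [map fold_right]; [lra|].
  apply pairwise_disjoint_cons_inv in Hd as [Hd1 Hd2].
  destruct (inb I k) eqn:E.
  - rewrite (sumlist_map_ext _ (fun _ => 0)), sumlist_map_zero; [lra|].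
    intros J HJ. destruct (inb J k) eqn:E2; [|reflexivity]. exfalso.
    apply (Hd2 J HJ k). split; now apply inb_in_interval.
  - specialize (IH Hd1 Hy). lra.
Qed.

Lemma jsum_le_fsum_sqr (x : seqR) (l : list interval) (u v : nat) : pairwise_disjoint l ->
  (forall J, In J l -> subinterval J (mkInterval u (Some v))) ->
  (forall a b, (u <= a)%nat -> (b <= v)%nat -> fsum x a b ^ 2 <= fsum (sqr x) a b) ->
  jsum x l <= fsum (sqr x) u v.
Proof.
  intros Hd Hl Hsub. rewrite jsum_sumlist.
  assert (Hfin : forall J, In J l ->
            exists m, J = mkInterval (lo J) (Some m) /\ (u <= lo J)%nat /\ (m <= v)%nat).
  { intros J HJ. destruct (Hl J HJ) as [H1 [m [H2 H3]]]. exists m.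
    split; [destruct J; cbn in *; now subst|]. cbn in H1. lia. }
  apply (Rle_trans _
    (sumlist (map (fun J => fsum (fun k => if inb J k then sqr x k else 0) u v) l))).
  - apply sumlist_map_le. intros J HJ. destruct (Hfin J HJ) as [m [EJ [H1 H2]]].
    rewrite EJ, isum_finite, pow2_abs, <- fsum_indicator by assumption. apply Hsub; assumption.
  - rewrite sumlist_map_fsum. apply fsum_le. intros k.
    apply sumlist_indicator_le; [assumption|apply sqr_nonneg].
Qed.

Lemma least_nat (Q : nat -> Prop) :
  (exists n, Q n) -> exists n, Q n /\ forall m, Q m -> (n <= m)%nat.
Proof.
  intros H. destruct (dec_inh_nat_subset_has_unique_least_element Q (fun n => classic (Q n)) H)
    as [n [[Hn Hmin] _]].
  eauto.
Qed.

Lemma bounded_nat_max (Q : nat -> Prop) (B j0 : nat) : Q j0 -> (forall j, Q j -> (j <= B)%nat) ->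
  exists j, Q j /\ forall j', Q j' -> (j' <= j)%nat.
Proof.
  revert j0. induction B as [|B IH]; intros j0 H0 Hb.
  - exists j0. split; [exact H0|]. intros j' Hj'.
    pose proof (Hb j' Hj'). pose proof (Hb j0 H0). lia.
  - destruct (classic (Q (S B))) as [HS|HS]; [exists (S B); split; auto|].
    apply (IH j0 H0). intros j Hj. specialize (Hb j Hj).
    destruct (Nat.eq_dec j (S B)) as [->|]; [contradiction|lia].
Qed.

Lemma norming_partition_at_gap (x : seqR) (p q : nat) :
  separated_by_partitions x -> supp x p -> supp x q -> (p < q)%nat ->
  exists P i i1, x_norming x P /\ inF P i1 = true /\ (i < i1)%nat /\
    hi (fI P i) = Some p /\ (lo (fI P i1) <= q)%nat /\
    forall j, inF P j = true -> (i1 < j)%nat -> (q < lo (fI P j))%nat.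
Proof.
  intros Hsep Hp Hq Hpq.
  destruct (least_nat (fun n => (p < n)%nat /\ supp x n)) as [n2 [[Hpn2 Hn2] Hmin]]; [eauto|].
  assert (Hn2q : (n2 <= q)%nat) by (apply Hmin; auto).
  assert (Hgap : forall n, (p < n < n2)%nat -> ~ supp x n).
  { intros n Hn Hs. specialize (Hmin n (conj (proj1 Hn) Hs)). lia. }
  destruct (Hsep p n2 Hp Hn2 Hpn2 Hgap)
    as [P [[Hnorm [Hends _]] [i [j [Hi [Hj [Hij [Hpi Hn2j]]]]]]]].
  pose proof Hnorm as [HP _].
  assert (Hij' : (i < j)%nat).
  { destruct (Nat.lt_total i j) as [H|[H|H]]; [exact H|contradiction|].
    destruct (family_hi_lt_lo P j i HP H Hi) as [m [Hm1 Hm2]].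
    destruct Hn2j as [_ Hn2j]. rewrite Hm1 in Hn2j. destruct Hpi. lia. }
  assert (Hhi : hi (fI P i) = Some p).
  { destruct (Hends i (inF_le P (S i) j Hj Hij')) as [_ [m [Hm1 Hm2]]].
    destruct (family_hi_lt_lo P i j HP Hij' Hj) as [m' [Hm'1 Hm'2]].
    rewrite Hm1 in Hm'1. injection Hm'1 as <-.
    destruct Hpi as [_ Hpi]. rewrite Hm1 in Hpi |- *. destruct Hn2j as [Hn2j _].
    destruct (Nat.eq_dec m p) as [->|Hne]; [reflexivity|].
    exfalso. apply (Hgap m); [lia|exact Hm2]. }
  destruct (bounded_nat_max
              (fun j' => inF P j' = true /\ (i < j')%nat /\ (lo (fI P j') <= q)%nat) q j)
    as [i1 [[Hi1 [Hii1 Hlo]] Hmax]].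
  { split; [exact Hj|]. split; [exact Hij'|]. destruct Hn2j. lia. }
  { intros j' [H1 [_ H3]]. pose proof (family_index_le_lo P j' HP H1). lia. }
  exists P, i, i1. do 5 (split; [assumption|]).
  intros j' Hj' Hi1j'. destruct (le_lt_dec (lo (fI P j')) q) as [H|H]; [|exact H].
  assert (Hij'' : (i < j')%nat) by lia.
  specialize (Hmax j' (conj Hj' (conj Hij'' H))). lia.
Qed.

Lemma split_products_pos (x : seqR) (p q : nat) :
  (forall a b, (p <= a)%nat -> (b <= q)%nat -> (b - a < q - p)%nat ->
     fsum x a b ^ 2 <= fsum (sqr x) a b) ->
  fsum (sqr x) p q < fsum x p q ^ 2 ->
  forall c, (p < c <= q)%nat -> 0 < fsum x p (pred c) * fsum x c q.
Proof.
  intros Hsub Hbig c Hc.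
  rewrite (fsum_split x p (pred c) q), (fsum_split (sqr x) p (pred c) q) in Hbig by lia.
  replace (S (pred c)) with c in Hbig by lia.
  pose proof (Hsub p (pred c) ltac:(lia) ltac:(lia) ltac:(lia)).
  pose proof (Hsub c q ltac:(lia) ltac:(lia) ltac:(lia)).
  nra.
Qed.

Lemma sign_transfer (A D U W y T : R) : 0 < D * U -> 0 <= W * U -> 0 <= A * y -> 0 < y * T ->
  y + T = D + U -> 0 <= W * (A + D).
Proof.
  intros H1 H2 H3 H4 H5.
  destruct (Rtotal_order U 0) as [HU|[HU|HU]].
  - assert (D < 0) by nra. assert (W <= 0) by nra.
    destruct (Rtotal_order y 0) as [Hy|[Hy|Hy]]; [|subst; nra|nra].
    assert (A <= 0) by nra. nra.
  - subst. nra.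
  - assert (0 < D) by nra. assert (0 <= W) by nra.
    destruct (Rtotal_order y 0) as [Hy|[Hy|Hy]]; [nra|subst; nra|].
    assert (0 <= A) by nra. nra.
Qed.

(* A shortest interval [p, q] violating the inequality, and a norming family in which
   I_i ends at p and I_i1 is the last interval starting in (p, q]. *)
Section GapContradiction.

Variables (x : seqR) (N : R) (P : ifamily) (p q i i1 : nat).

Hypothesis HN : normJ x = Finite N.
Hypothesis HP : is_family P.
Hypothesis HI : normI x P = Finite N.
Hypothesis Hi1 : inF P i1 = true.
Hypothesis Hii1 : (i < i1)%nat.
Hypothesis Hhi : hi (fI P i) = Some p.
Hypothesis Hlo : (lo (fI P i1) <= q)%nat.
Hypothesis Hafter : forall j, inF P j = true -> (i1 < j)%nat -> (q < lo (fI P j))%nat.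
Hypothesis Hsub : forall a b, (p <= a)%nat -> (b <= q)%nat -> (b - a < q - p)%nat ->
  fsum x a b ^ 2 <= fsum (sqr x) a b.
Hypothesis Hbig : fsum (sqr x) p q < fsum x p q ^ 2.

Let Hi : inF P i = true.
Proof. apply (inF_le P i i1 Hi1). lia. Qed.

Let Hap : (lo (fI P i) <= p)%nat.
Proof.
  pose proof (family_valid P i HP Hi) as Hv. unfold valid_interval in Hv. now rewrite Hhi in Hv.
Qed.

Let Hpc : (p < lo (fI P i1))%nat.
Proof.
  destruct (family_hi_lt_lo P i i1 HP Hii1 Hi1) as [m [Hm1 Hm2]].
  rewrite Hhi in Hm1. injection Hm1 as <-. exact Hm2.
Qed.

(* Splitting I_i = [a, p] into [a, p - 1] and [p, p] cannot improve the family. *)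
Lemma gap_first_same_sign : 0 <= (fsum x (lo (fI P i)) p - x p) * x p.
Proof.
  set (a := lo (fI P i)).
  destruct (Nat.eq_dec a p) as [Hap'|Hap'].
  { rewrite Hap', fsum_single. nra. }
  assert (Hs : fsum x a p = fsum x a (pred p) + x p).
  { rewrite (fsum_split x a (pred p) p) by lia. replace (S (pred p)) with p by lia.
    now rewrite fsum_single. }
  assert (Hrep : jsum x (mkInterval a (Some (pred p)) :: mkInterval p (Some p) :: nil)
                 <= fsum (famsq x P) i i).
  { apply (jsum_replace_block x N P i i); auto.
    - repeat constructor; unfold valid_interval; cbn; lia.
    - apply pairwise_disjoint_cons;
        [|apply pairwise_disjoint_cons; [intros _ []|apply pairwise_disjoint_nil]].
      intros J [<-|[]]. apply (disjoint_intervals_lt _ _ (pred p)); cbn; [reflexivity|lia].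
    - intros J HJ. apply in_block_gap_hull; [assumption| |].
      + destruct HJ as [<-|[<-|[]]]; cbn; lia.
      + rewrite Hhi. intros e He. injection He as <-.
        destruct HJ as [<-|[<-|[]]]; cbn; eexists; split; (reflexivity || lia). }
  rewrite !jsum_cons, jsum_nil, !isum_finite, (fsum_single (famsq x P)), famsq_in in Hrep
    by exact Hi.
  unfold isum in Hrep. rewrite Hhi, !fsum_single, !pow2_abs in Hrep. fold a in Hrep.
  rewrite Hs in Hrep |- *. nra.
Qed.

Lemma gap_middle_le :
  fsum (famsq x P) (S i) (pred i1) <= fsum (sqr x) (S p) (pred (lo (fI P i1))).
Proof.
  set (L := List.seq (S i) (i1 - S i)).
  assert (HL : forall j, In j L -> inF P j = true /\ (i < j < i1)%nat).
  { intros j Hj. apply in_seq in Hj. split; [apply (inF_le P j i1 Hi1)|]; lia. }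
  replace (fsum (famsq x P) (S i) (pred i1)) with (jsum x (map (fI P) L)).
  2:{ rewrite jsum_family by (intros j Hj; apply (HL j Hj)). unfold fsum, sumlist, L.
      now replace (S (pred i1) - S i)%nat with (i1 - S i)%nat by lia. }
  apply jsum_le_fsum_sqr.
  - apply pairwise_disjoint_family; [assumption|apply seq_NoDup|intros j Hj; apply (HL j Hj)].
  - intros J HJ. apply in_map_iff in HJ as [j [<- Hj]]. destruct (HL j Hj) as [Hj' Hjr].
    destruct (family_hi_lt_lo P i j HP (proj1 Hjr) Hj') as [m [Hm1 Hm2]].
    destruct (family_hi_lt_lo P j i1 HP (proj2 Hjr) Hi1) as [m' [Hm'1 Hm'2]].
    rewrite Hhi in Hm1. injection Hm1 as <-. split; cbn; [lia|]. exists m'. split; [exact Hm'1|lia].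
  - intros a b Ha Hb. apply Hsub; lia.
Qed.

Lemma gap_replace (new : list interval) :
  List.Forall valid_interval new -> pairwise_disjoint new ->
  (forall J, In J new -> in_block_gap P i i1 J) ->
  jsum x new <= fsum x (lo (fI P i)) p ^ 2 + fsum (famsq x P) (S i) (pred i1) + famsq x P i1.
Proof.
  intros Hv Hd Hgap. eapply Rle_trans; [apply (jsum_replace_block x N P i i1); auto; lia|].
  rewrite fsum_first, (fsum_split _ (S i) (pred i1) i1) by lia.
  replace (S (pred i1)) with i1 by lia.
  rewrite fsum_single, famsq_in by exact Hi. unfold isum at 1. rewrite Hhi, pow2_abs. lra.
Qed.

Lemma gap_first_product_pos : 0 < x p * fsum x (S p) q.
Proof.
  pose proof (split_products_pos x p q Hsub Hbig (S p) ltac:(lia)) as H.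
  now rewrite fsum_single in H.
Qed.

(* With s the sum over I_i and T the sum over (p, q]: the violation gives
   Q(p+1, q) < 2 x(p) T + T^2, and x(p) T <= s T because s - x(p), x(p) and T share signs. *)
Lemma gap_no_room :
  2 * fsum x (lo (fI P i)) p * fsum x (S p) q + fsum x (S p) q ^ 2 <=
  fsum (famsq x P) (S i) (pred i1) + fsum (sqr x) (lo (fI P i1)) q -> False.
Proof.
  intros Hroom.
  pose proof gap_middle_le as Hmid. pose proof gap_first_same_sign as Hfirst.
  pose proof gap_first_product_pos as HxT.
  rewrite (fsum_first x p q), (fsum_first (sqr x) p q) in Hbig by lia.
  rewrite (fsum_split (sqr x) (S p) (pred (lo (fI P i1))) q) in Hbig by lia.
  replace (S (pred (lo (fI P i1)))) with (lo (fI P i1)) in Hbig by lia.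
  unfold sqr at 1 in Hbig.
  set (s := fsum x (lo (fI P i)) p) in *. set (T := fsum x (S p) q) in *.
  assert (HsT : 0 <= (s - x p) * T).
  { destruct (Rle_or_lt 0 ((s - x p) * T)) as [H|H]; [exact H|].
    assert (0 < x p * x p) by nra. nra. }
  nra.
Qed.

Lemma gap_last_inside (e : nat) : hi (fI P i1) = Some e -> (e <= q)%nat -> False.
Proof.
  intros He Heq.
  assert (Hrep : jsum x (mkInterval (lo (fI P i)) (Some q) :: nil) <=
                 fsum x (lo (fI P i)) p ^ 2 + fsum (famsq x P) (S i) (pred i1) + famsq x P i1).
  { apply gap_replace.
    - repeat constructor. unfold valid_interval; cbn. lia.
    - apply pairwise_disjoint_cons; [intros _ []|apply pairwise_disjoint_nil].
    - intros J [<-|[]]. split; [cbn; lia|]. intros j Hj Hij. exists q. split; [reflexivity|].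
      now apply Hafter. }
  rewrite jsum_cons, jsum_nil, isum_finite, famsq_in in Hrep by exact Hi1.
  unfold isum in Hrep. rewrite He, !pow2_abs in Hrep.
  rewrite (fsum_split x (lo (fI P i)) p q) in Hrep by lia.
  assert (Hce : fsum x (lo (fI P i1)) e ^ 2 <= fsum (sqr x) (lo (fI P i1)) q).
  { eapply Rle_trans; [apply Hsub; lia|]. apply fsum_le_r; [apply sqr_nonneg|exact Heq]. }
  apply gap_no_room. nra.
Qed.

Section LastBeyond.

Hypothesis Hbeyond : forall e, hi (fI P i1) = Some e -> (q < e)%nat.

Let hJ := hi (fI P i1).

Let Hvalid_tail : forall b, (b <= S q)%nat -> valid_interval (mkInterval b hJ).
Proof.
  intros b Hb. unfold valid_interval; cbn. unfold hJ.
  destruct (hi (fI P i1)) as [e|] eqn:He; [|trivial]. specialize (Hbeyond e eq_refl). lia.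
Qed.

Let Hgap_tail : forall b, (lo (fI P i) <= b)%nat -> in_block_gap P i i1 (mkInterval b hJ).
Proof.
  intros b Hb. apply in_block_gap_hull; [assumption|exact Hb|]. intros e He. exists e.
  split; [exact He|lia].
Qed.

Let Hlast : famsq x P i1 = (fsum x (lo (fI P i1)) q + isum x (mkInterval (S q) hJ)) ^ 2.
Proof.
  rewrite famsq_in by exact Hi1.
  replace (fI P i1) with (mkInterval (lo (fI P i1)) hJ) at 1 by (unfold hJ; now destruct (fI P i1)).
  rewrite (isum_split x N _ q hJ HN), pow2_abs
    by (lia || exact (Hvalid_tail q (le_S _ _ (le_n q)))).
  reflexivity.
Qed.

Lemma gap_last_beyond_same_sign :
  0 <= isum x (mkInterval (S q) hJ) * fsum x (lo (fI P i1)) q -> False.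
Proof.
  set (a := lo (fI P i)). set (c := lo (fI P i1)).
  set (W := isum x (mkInterval (S q) hJ)). set (U := fsum x c q). intros HWU.
  assert (Hrep : jsum x (mkInterval a hJ :: nil) <=
                 fsum x a p ^ 2 + fsum (famsq x P) (S i) (pred i1) + famsq x P i1).
  { apply gap_replace.
    - repeat constructor. apply Hvalid_tail. lia.
    - apply pairwise_disjoint_cons; [intros _ []|apply pairwise_disjoint_nil].
    - intros J [<-|[]]. now apply Hgap_tail. }
  rewrite jsum_cons, jsum_nil, Hlast, (isum_split x N a q hJ HN), pow2_abs in Hrep
    by (lia || exact (Hvalid_tail q (le_S _ _ (le_n q)))).
  rewrite (fsum_split x a p q) in Hrep by lia. fold W c in Hrep. fold U in Hrep.
  assert (HDU : 0 < fsum x p (pred c) * U) by (apply (split_products_pos x p q Hsub Hbig); lia).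
  assert (Hsplit : x p + fsum x (S p) q = fsum x p (pred c) + U).
  { rewrite <- fsum_first by lia. unfold U.
    rewrite (fsum_split x p (pred c) q) by lia. now replace (S (pred c)) with c by lia. }
  pose proof (sign_transfer (fsum x a p - x p) _ U W (x p) (fsum x (S p) q) HDU HWU
                gap_first_same_sign gap_first_product_pos Hsplit) as Hsign.
  assert (HU : U ^ 2 <= fsum (sqr x) c q) by (apply Hsub; lia).
  assert (HWsplit : W * (x p + fsum x (S p) q) = W * (fsum x p (pred c) + U)) by now rewrite Hsplit.
  apply gap_no_room. fold a c. nra.
Qed.

Lemma gap_last_beyond_opposite_sign :
  isum x (mkInterval (S q) hJ) * fsum x (lo (fI P i1)) q < 0 -> False.
Proof.
  set (a := lo (fI P i)). set (c := lo (fI P i1)).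
  set (W := isum x (mkInterval (S q) hJ)). set (U := fsum x c q). intros HWU.
  assert (Hrep : jsum x (mkInterval a (Some q) :: mkInterval (S q) hJ :: nil) <=
                 fsum x a p ^ 2 + fsum (famsq x P) (S i) (pred i1) + famsq x P i1).
  { apply gap_replace.
    - repeat constructor; [unfold valid_interval; cbn; lia|]. now apply Hvalid_tail.
    - apply pairwise_disjoint_cons;
        [|apply pairwise_disjoint_cons; [intros _ []|apply pairwise_disjoint_nil]].
      intros J [<-|[]]. apply (disjoint_intervals_lt _ _ q); cbn; [reflexivity|lia].
    - intros J [<-|[<-|[]]]; [|apply Hgap_tail; lia].
      apply in_block_gap_hull; [assumption|cbn; lia|]. intros e He. exists q.
      split; [reflexivity|]. specialize (Hbeyond e He). lia. }
  rewrite !jsum_cons, jsum_nil, isum_finite, Hlast, !pow2_abs in Hrep.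
  rewrite (fsum_split x a p q) in Hrep by lia. fold W c in Hrep. fold U in Hrep.
  assert (HU : U ^ 2 <= fsum (sqr x) c q) by (apply Hsub; lia).
  apply gap_no_room. fold a c. nra.
Qed.

End LastBeyond.

Lemma gap_contradiction : False.
Proof.
  assert (Hcases : (exists e, hi (fI P i1) = Some e /\ (e <= q)%nat) \/
                   forall e, hi (fI P i1) = Some e -> (q < e)%nat).
  { destruct (hi (fI P i1)) as [e|]; [destruct (le_lt_dec e q)|].
    - left. eauto.
    - right. intros e' [= <-]. lia.
    - right. discriminate. }
  destruct Hcases as [[e [He Heq]]|Hbeyond]; [exact (gap_last_inside e He Heq)|].
  destruct (Rle_or_lt 0 (isum x (mkInterval (S q) (hi (fI P i1))) * fsum x (lo (fI P i1)) q))
    as [HWU|HWU].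
  - exact (gap_last_beyond_same_sign Hbeyond HWU).
  - exact (gap_last_beyond_opposite_sign Hbeyond HWU).
Qed.

End GapContradiction.

Lemma sq_fsum_le_fsum_sqr (x : seqR) (N : R) : normJ x = Finite N -> separated_by_partitions x ->
  forall p q, fsum x p q ^ 2 <= fsum (sqr x) p q.
Proof.
  intros HN Hsep.
  assert (H : forall n p q, (q - p <= n)%nat -> fsum x p q ^ 2 <= fsum (sqr x) p q).
  2:{ intros p q. now apply (H (q - p)%nat). }
  induction n as [|n IH]; intros p q Hn.
  { destruct (le_lt_dec p q) as [Hpq|Hpq].
    - replace q with p by lia. rewrite !fsum_single. unfold sqr. lra.
    - rewrite !fsum_empty by exact Hpq. lra. }
  destruct (le_lt_dec (q - p) n) as [Hqp|Hqp]; [now apply IH|].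
  destruct (Req_dec (x p) 0) as [Hp|Hp].
  { rewrite (fsum_first x p q), (fsum_first (sqr x) p q) by lia.
    unfold sqr at 1. rewrite Hp, pow_i, !Rplus_0_l by lia. apply IH. lia. }
  destruct (Req_dec (x q) 0) as [Hq|Hq].
  { destruct q as [|q']; [lia|].
    rewrite (fsum_last x p q'), (fsum_last (sqr x) p q') by lia.
    unfold sqr at 2. rewrite Hq, pow_i, !Rplus_0_r by lia. apply IH. lia. }
  apply Rnot_lt_le. intros Hbig.
  destruct (norming_partition_at_gap x p q Hsep Hp Hq ltac:(lia))
    as [P [i [i1 [[HP HI] [Hi1 [Hii1 [Hhi [Hlo Hafter]]]]]]]].
  rewrite HN in HI.
  apply (gap_contradiction x N P p q i i1); try assumption.
  intros a b Ha Hb Hab. apply IH. lia.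
Qed.

(** * Equality of the norms *)

Definition trunc (M : nat) (I : interval) : interval :=
  match hi I with Some _ => I | None => mkInterval (lo I) (Some M) end.

Lemma trunc_subinterval (M : nat) (I : interval) : subinterval (trunc M I) I.
Proof.
  destruct I as [l [e|]]; unfold trunc, subinterval; cbn; [|split; [lia|trivial]].
  split; [lia|]. exists e. split; [reflexivity|lia].
Qed.

Lemma lim_fsum_Series (x : seqR) (N : R) (a : nat) : normJ x = Finite N ->
  is_lim_seq (fun n => fsum x a n) (Series (fun k => x (a + k)%nat)).
Proof.
  intros HN. apply (is_lim_seq_incr_n _ a).
  apply (is_lim_seq_ext (sum_n (fun k => x (a + k)%nat))).
  - intros n. rewrite sum_n_shift_fsum. f_equal. lia.
  - apply Series_correct. exact (ex_series_of_normJ x N a HN).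
Qed.

Lemma lim_jsum_trunc (x : seqR) (N : R) (l : list interval) : normJ x = Finite N ->
  is_lim_seq (fun n => jsum x (map (trunc n) l)) (jsum x l).
Proof.
  intros HN. induction l as [|I l IH]; cbn [map].
  - exact (is_lim_seq_const 0).
  - assert (HI : is_lim_seq (fun n => isum x (trunc n I)) (isum x I)).
    { unfold trunc. destruct (hi I) eqn:E; [apply is_lim_seq_const|].
      unfold isum at 2. rewrite E. exact (lim_fsum_Series x N (lo I) HN). }
    apply (is_lim_seq_ext
             (fun n => isum x (trunc n I) * isum x (trunc n I) + jsum x (map (trunc n) l))).
    { intros n. rewrite jsum_cons, pow2_abs. ring. }
    rewrite jsum_cons, pow2_abs. replace (isum x I ^ 2) with (isum x I * isum x I) by ring.
    apply is_lim_seq_plus'; [apply is_lim_seq_mult'|]; assumption.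
Qed.

Lemma le_list_max (k : nat) (l : list nat) : In k l -> (k <= list_max l)%nat.
Proof.
  intros Hk. pose proof (proj1 (list_max_le l (list_max l)) (le_n _)) as Hall.
  rewrite List.Forall_forall in Hall. auto.
Qed.

Lemma jsum_le_sqr_bound (x : seqR) (N M : R) (l : list interval) :
  normJ x = Finite N -> separated_by_partitions x ->
  (forall m, fsum (sqr x) 0 m <= M) -> pairwise_disjoint l -> jsum x l <= M.
Proof.
  intros HN Hsep HM Hd.
  set (ends := fun I => (lo I + match hi I with Some e => e | None => 0 end)%nat).
  set (B := list_max (map ends l)).
  assert (HB : forall I, In I l -> (lo I <= B)%nat /\ forall e, hi I = Some e -> (e <= B)%nat).
  { intros I HI. pose proof (le_list_max _ _ (in_map ends l I HI)) as H. fold B in H.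
    unfold ends in H. split; [lia|]. intros e He. rewrite He in H. lia. }
  assert (Htrunc : forall n, jsum x (map (trunc (n + B)) l) <= M).
  { intros n. eapply Rle_trans; [|apply (HM (n + B)%nat)].
    apply jsum_le_fsum_sqr.
    - apply pairwise_disjoint_map_subinterval; [apply trunc_subinterval|assumption].
    - intros J HJ. apply in_map_iff in HJ as [I [<- HI]]. destruct (HB I HI) as [H1 H2].
      unfold trunc, subinterval. destruct (hi I) as [e|] eqn:E; cbn; [|split; [lia|eauto]].
      split; [lia|]. exists e. split; [exact E|]. specialize (H2 e eq_refl). lia.
    - intros a b _ _. exact (sq_fsum_le_fsum_sqr x N HN Hsep a b). }
  pose proof (proj1 (is_lim_seq_incr_n _ B _) (lim_jsum_trunc x N l HN)) as Hlim.
  exact (is_lim_seq_le _ (fun _ => M) _ _ Htrunc Hlim (is_lim_seq_const M)).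
Qed.

Lemma jsum_singletons (x : seqR) (L : list nat) :
  jsum x (map (fun k => mkInterval k (Some k)) L) = sumlist (map (sqr x) L).
Proof.
  rewrite jsum_sumlist, map_map. apply sumlist_map_ext. intros k _.
  now rewrite isum_finite, fsum_single, pow2_abs.
Qed.

Lemma norm2_le_normJ (x : seqR) : Rbar_le (norm2 x) (normJ x).
Proof.
  unfold norm2.
  match goal with |- Rbar_le (Lub_Rbar ?E) _ => destruct (Lub_Rbar_correct E) as [_ Hlub] end.
  apply Hlub. intros r [m ->]. unfold normJ.
  match goal with |- Rbar_le _ (Lub_Rbar ?E) => destruct (Lub_Rbar_correct E) as [Hub _] end.
  apply Hub. exists (map (fun k => mkInterval k (Some k)) (List.seq 0 (S m))). repeat split.
  - discriminate.
  - apply List.Forall_forall. intros I HI. apply in_map_iff in HI as [k [<- _]].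
    unfold valid_interval; cbn; lia.
  - apply pairwise_disjoint_singletons, seq_NoDup.
  - change (sqrt (fsum (fun k => x k ^ 2) 0 m) =
            sqrt (jsum x (map (fun k => mkInterval k (Some k)) (List.seq 0 (S m))))).
    rewrite jsum_singletons. reflexivity.
Qed.

Lemma sqrt_fsum_sqr_le_norm2 (x : seqR) (m : nat) :
  Rbar_le (Finite (sqrt (fsum (sqr x) 0 m))) (norm2 x).
Proof.
  unfold norm2.
  match goal with |- Rbar_le _ (Lub_Rbar ?E) => destruct (Lub_Rbar_correct E) as [Hub _] end.
  apply Hub. now exists m.
Qed.

Lemma normJ_eq_norm2 (x : seqR) : inJ x -> separated_by_partitions x -> normJ x = norm2 x.
Proof.
  intros HJ Hsep. unfold inJ, is_finite in HJ.
  set (N := real (normJ x)) in HJ. symmetry in HJ. rename HJ into HN.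
  pose proof (norm2_le_normJ x) as H2J. rewrite HN in H2J.
  pose proof (sqrt_fsum_sqr_le_norm2 x 0) as H0.
  destruct (norm2 x) as [s| |] eqn:E2; [|destruct H2J|destruct H0].
  assert (Hs : 0 <= s) by (pose proof (sqrt_pos (fsum (sqr x) 0 0)); exact (Rle_trans _ _ _ H H0)).
  assert (HM : forall m, fsum (sqr x) 0 m <= s ^ 2).
  { intros m. pose proof (sqrt_fsum_sqr_le_norm2 x m) as Hm. rewrite E2 in Hm. cbn in Hm.
    rewrite <- (pow2_sqrt (fsum (sqr x) 0 m)) by (apply fsum_nonneg, sqr_nonneg).
    apply pow_incr. split; [apply sqrt_pos|exact Hm]. }
  apply Rbar_le_antisym; [|rewrite HN; exact H2J].
  unfold normJ.
  match goal with |- Rbar_le (Lub_Rbar ?E) _ => destruct (Lub_Rbar_correct E) as [_ Hlub] end.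
  apply Hlub. intros r [l [_ [_ [Hd ->]]]]. change (sqrt (jsum x l) <= s).
  rewrite <- (sqrt_pow2 s) by exact Hs. apply sqrt_le_1_alt.
  exact (jsum_le_sqr_bound x N _ l HN Hsep HM Hd).
Qed.

(** * The partition into singletons *)

Fixpoint supp_count (x : seqR) (n : nat) : nat :=
  match n with
  | O => O
  | S n' => (supp_count x n' + if Req_EM_T (x n') 0 then 0 else 1)%nat
  end.

Lemma supp_count_mono (x : seqR) (n m : nat) :
  (n <= m)%nat -> (supp_count x n <= supp_count x m)%nat.
Proof. induction 1; cbn; lia. Qed.

Lemma supp_count_lt (x : seqR) (n m : nat) : supp x n -> (n < m)%nat ->
  (supp_count x n < supp_count x m)%nat.
Proof.
  intros Hs Hnm. apply (Nat.lt_le_trans _ (supp_count x (S n))); [|now apply supp_count_mono].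
  cbn. destruct (Req_EM_T (x n) 0); [contradiction|lia].
Qed.

Lemma supp_count_inj (x : seqR) (n m : nat) : supp x n -> supp x m ->
  supp_count x n = supp_count x m -> n = m.
Proof.
  intros Hn Hm Hc. destruct (Nat.lt_total n m) as [H|[H|H]]; [|exact H|].
  - pose proof (supp_count_lt x n m Hn H). lia.
  - pose proof (supp_count_lt x m n Hm H). lia.
Qed.

Lemma supp_count_surj (x : seqR) (N i : nat) : (i < supp_count x N)%nat ->
  exists n, (n < N)%nat /\ supp x n /\ supp_count x n = i.
Proof.
  induction N as [|N IH]; cbn; intros H; [lia|].
  destruct (Req_EM_T (x N) 0) as [E|E].
  - destruct (IH ltac:(lia)) as [n [H1 H2]]. exists n. split; [lia|exact H2].
  - destruct (le_lt_dec (supp_count x N) i) as [Hle|Hlt].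
    + exists N. repeat split; [lia|exact E|lia].
    + destruct (IH Hlt) as [n [H1 H2]]. exists n. split; [lia|exact H2].
Qed.

(* The [i]-th point of the support; arbitrary when the support has at most [i] points. *)
Definition supp_enum (x : seqR) (i : nat) : nat :=
  epsilon (inhabits 0%nat) (fun n => supp x n /\ supp_count x n = i).

Lemma supp_enum_spec (x : seqR) (i : nat) : (exists n, supp x n /\ supp_count x n = i) ->
  supp x (supp_enum x i) /\ supp_count x (supp_enum x i) = i.
Proof. intros H. exact (epsilon_spec _ _ H). Qed.

Lemma supp_enum_count (x : seqR) (n : nat) : supp x n -> supp_enum x (supp_count x n) = n.
Proof.
  intros Hn. destruct (supp_enum_spec x (supp_count x n)) as [H1 H2]; [eauto|].
  exact (supp_count_inj x _ _ H1 Hn H2).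
Qed.

Definition supp_family (x : seqR) (K : option nat) : ifamily :=
  mkFamily K (fun i => mkInterval (supp_enum x i) (Some (supp_enum x i))).

Section SupportFamily.

Variables (x : seqR) (K : option nat).

Let P := supp_family x K.

Hypothesis HK : forall i, inF P i = true <-> exists n, supp x n /\ supp_count x n = i.
Hypothesis Hlast : forall k, K = Some k ->
  (1 <= k)%nat /\ Finite (INR (supp_enum x (k - 1))) = sup_nat (supp x).

Let Henum : forall i, inF P i = true -> supp x (supp_enum x i) /\ supp_count x (supp_enum x i) = i.
Proof. intros i Hi. apply supp_enum_spec, HK, Hi. Qed.

Lemma supp_family_is_family : is_family P.
Proof.
  split; [intros k Hk; exact (proj1 (Hlast k Hk))|]. split.
  - intros i _. unfold valid_interval; cbn. lia.
  - intros i Hi. cbn. exists (supp_enum x i). split; [reflexivity|].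
    destruct (Henum (S i) Hi) as [H1 H2].
    destruct (Henum i (inF_le P i (S i) Hi (le_S _ _ (le_n i)))) as [H3 H4].
    destruct (le_lt_dec (supp_enum x (S i)) (supp_enum x i)) as [H|H]; [|exact H].
    pose proof (supp_count_mono x _ _ H). lia.
Qed.

Lemma famsq_supp_family_count (N : nat) :
  sumlist (map (famsq x P) (List.seq 0 (supp_count x N))) = sumlist (map (sqr x) (List.seq 0 N)).
Proof.
  induction N as [|N IH]; [reflexivity|].
  rewrite (seq_S N 0), map_app, sumlist_app. cbn [supp_count].
  destruct (Req_EM_T (x N) 0) as [E|E].
  - rewrite Nat.add_0_r, IH. unfold sumlist at 3; cbn. unfold sqr. rewrite E. ring.
  - rewrite seq_app, map_app, sumlist_app, IH. unfold sumlist at 2 4; cbn.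
    rewrite famsq_in by (apply HK; eauto). cbn [P supp_family fI].
    rewrite supp_enum_count, isum_finite, fsum_single, pow2_abs by exact E. reflexivity.
Qed.

Lemma famsq_supp_family_dominated (n : nat) : exists N,
  sumlist (map (famsq x P) (List.seq 0 n)) <=
  sumlist (map (famsq x P) (List.seq 0 (supp_count x N))).
Proof.
  destruct (classic (exists N, (n <= supp_count x N)%nat)) as [[N HN]|Hno].
  { exists N. apply sumlist_seq_le; [apply famsq_nonneg|exact HN]. }
  assert (Hbound : forall N, (supp_count x N < n)%nat).
  { intros N. apply Nat.nle_gt. intros H. apply Hno. eauto. }
  destruct (bounded_nat_max (fun j => exists N, supp_count x N = j) n 0) as [j [[N0 <-] Hmax]].
  { exists 0%nat. reflexivity. }
  { intros j [N <-]. specialize (Hbound N). lia. }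
  exists N0. specialize (Hbound N0).
  replace n with (supp_count x N0 + (n - supp_count x N0))%nat at 1 by lia.
  rewrite seq_app, map_app, sumlist_app.
  rewrite (sumlist_map_ext _ (fun _ => 0) (List.seq (0 + supp_count x N0) _)), sumlist_map_zero;
    [lra|].
  intros i Hi. apply in_seq in Hi. unfold famsq.
  destruct (inF P i) eqn:E; [|reflexivity]. exfalso.
  destruct (proj1 (HK i) E) as [m [Hm <-]].
  pose proof (supp_count_lt x m (S m) Hm (le_n _)).
  specialize (Hmax _ (ex_intro _ (S m) eq_refl)). lia.
Qed.

Lemma normI_supp_family : normI x P = norm2 x.
Proof.
  unfold normI, norm2. apply Lub_Rbar_dominated_eq.
  - intros r [m ->]. destruct (famsq_supp_family_dominated (S m)) as [N HN].
    exists (sqrt (fsum (sqr x) 0 N)). split; [now exists N|].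
    apply sqrt_le_1_alt. change (fsum (famsq x P) 0 m <= fsum (sqr x) 0 N).
    rewrite !fsum_0_sumlist. eapply Rle_trans; [exact HN|].
    rewrite famsq_supp_family_count. apply sumlist_seq_le; [apply sqr_nonneg|lia].
  - intros r [m ->]. exists (sqrt (fsum (famsq x P) 0 (supp_count x (S m)))).
    split; [now exists (supp_count x (S m))|].
    apply sqrt_le_1_alt. change (fsum (sqr x) 0 m <= fsum (famsq x P) 0 (supp_count x (S m))).
    rewrite !fsum_0_sumlist, <- famsq_supp_family_count.
    apply sumlist_seq_le; [apply famsq_nonneg|lia].
Qed.

Lemma supp_family_norming_partition : normJ x = norm2 x ->
  x_norming_partition x P /\
  (forall i, inF P i = true -> exists n, supp x n /\ fI P i = mkInterval n (Some n)) /\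
  (forall n, supp x n -> exists i, inF P i = true /\ fI P i = mkInterval n (Some n)).
Proof.
  intros Heq.
  split; [split; [split; [apply supp_family_is_family|now rewrite normI_supp_family]|split]|split].
  - intros i Hi. cbn. destruct (Henum i (inF_le P i (S i) Hi (le_S _ _ (le_n i)))) as [H1 _].
    split; [exact H1|]. eauto.
  - intros k Hk. change (K = Some k) in Hk. destruct (Hlast k Hk) as [H1 H2]. cbn.
    split; [|exact H2]. apply Henum. unfold P, supp_family, inF; cbn. rewrite Hk.
    apply Nat.ltb_lt. lia.
  - intros i Hi. exists (supp_enum x i). split; [apply Henum; exact Hi|reflexivity].
  - intros n Hn. exists (supp_count x n). split; [apply HK; eauto|]. cbn.
    now rewrite supp_enum_count.
Qed.

End SupportFamily.

Lemma supp_family_finite_support (x : seqR) (n0 B : nat) : supp x n0 ->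
  (forall n, (B <= n)%nat -> ~ supp x n) ->
  (forall i, inF (supp_family x (Some (supp_count x B))) i = true <->
             exists n, supp x n /\ supp_count x n = i) /\
  (forall k, Some (supp_count x B) = Some k ->
             (1 <= k)%nat /\ Finite (INR (supp_enum x (k - 1))) = sup_nat (supp x)).
Proof.
  intros Hn0 HB.
  assert (HsB : forall n, supp x n -> (n < B)%nat).
  { intros n Hn. destruct (le_lt_dec B n) as [H|H]; [now destruct (HB n H)|exact H]. }
  assert (HK : forall i, inF (supp_family x (Some (supp_count x B))) i = true <->
                         exists n, supp x n /\ supp_count x n = i).
  { intros i. unfold inF, supp_family; cbn [fF]. rewrite Nat.ltb_lt. split.
    - intros H. destruct (supp_count_surj x B i H) as [n [_ Hn]]. eauto.
    - intros [n [H1 <-]]. now apply supp_count_lt, HsB. }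
  split; [exact HK|]. intros k Hk. injection Hk as <-.
  pose proof (supp_count_lt x n0 B Hn0 (HsB n0 Hn0)) as Hk1.
  split; [lia|].
  destruct (supp_enum_spec x (supp_count x B - 1)) as [He1 He2].
  { apply HK. unfold inF, supp_family; cbn [fF]. apply Nat.ltb_lt. lia. }
  symmetry. apply is_lub_Rbar_unique. split.
  - intros r [n [Hs ->]]. apply le_INR.
    destruct (le_lt_dec n (supp_enum x (supp_count x B - 1))) as [H|H]; [exact H|].
    pose proof (supp_count_lt x _ _ He1 H). pose proof (supp_count_lt x n B Hs (HsB n Hs)). lia.
  - intros b Hb. apply Hb. now exists (supp_enum x (supp_count x B - 1)).
Qed.

Lemma supp_family_infinite_support (x : seqR) : (forall B, exists n, (B <= n)%nat /\ supp x n) ->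
  forall i, inF (supp_family x None) i = true <-> exists n, supp x n /\ supp_count x n = i.
Proof.
  intros Hinf i. split; [intros _|intros _; reflexivity].
  assert (Hunb : forall j, exists N, (j <= supp_count x N)%nat).
  { induction j as [|j [N HN]]; [exists 0%nat; lia|].
    destruct (Hinf N) as [m [Hm1 Hm2]]. exists (S m).
    pose proof (supp_count_lt x m (S m) Hm2 (le_n _)).
    pose proof (supp_count_mono x N m Hm1). lia. }
  destruct (Hunb (S i)) as [N HN]. destruct (supp_count_surj x N i HN) as [n [_ Hn]]. eauto.
Qed.

Lemma supp_family_exists (x : seqR) (n0 : nat) : supp x n0 -> exists K,
  (forall i, inF (supp_family x K) i = true <-> exists n, supp x n /\ supp_count x n = i) /\
  (forall k, K = Some k -> (1 <= k)%nat /\ Finite (INR (supp_enum x (k - 1))) = sup_nat (supp x)).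
Proof.
  intros Hn0. destruct (classic (exists B, forall n, (B <= n)%nat -> ~ supp x n)) as [[B HB]|Hinf].
  - exists (Some (supp_count x B)). exact (supp_family_finite_support x n0 B Hn0 HB).
  - exists None. split; [|discriminate]. apply supp_family_infinite_support.
    intros B. apply NNPP. intros Hn. apply Hinf. exists B. intros n H1 H2. apply Hn. eauto.
Qed.

Theorem proposition3p12 (x : seqR) :
  (exists n, x n <> 0) -> inJ x -> separated_by_partitions x ->
  (exists P : ifamily,
     x_norming_partition x P /\
     (forall i, inF P i = true ->
        exists n, supp x n /\ fI P i = mkInterval n (Some n)) /\
     (forall n, supp x n ->
        exists i, inF P i = true /\ fI P i = mkInterval n (Some n))) /\
  normJ x = norm2 x.
Proof.
  intros [n0 Hn0] HJ Hsep.
  pose proof (normJ_eq_norm2 x HJ Hsep) as Heq.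
  destruct (supp_family_exists x n0 Hn0) as [K [HK Hlast]].
  split; [|exact Heq].
  exists (supp_family x K). exact (supp_family_norming_partition x K HK Hlast Heq).
Qed.
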